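(* Let $\mathbf{C}_{\mathrm{ATM}}$ be the class of all absolute team independence structures $\mathcal{I}_X$ (for all teams $X$, with arbitrary domain $I$ and arbitrary value set $M$). Then for every set $\Sigma$ of absolute independence atoms over $V$ and every absolute independence atom $\phi$ over $V$, $$\Sigma\vdash_{\mathcal{AI}}\phi \iff \Sigma\models_{\mathbf{C}_{\mathrm{ATM}}}\phi .$$
   Context: Fix a countably infinite set $V$ of variables. An absolute independence atom over $V$ is an expression $\bot(\vec x)$ where $\vec x$ is a finite (possibly empty) sequence of pairwise distinct variables from $V$. Derivability $\Sigma\vdash_{\mathcal{AI}}\phi$ means that $\phi$ belongs to the smallest set of absolute independence atoms containing $\Sigma$ and closed under the rules: (a) $\bot(\emptyset)$ (empty sequence) is derivable; (b) from $\bot(\vec x\vec y)$ infer $\bot(\vec x)$ (here $\vec x\vec y$ is concatenation); (c) from $\bot(\vec x)$ infer $\bot(\vec y)$ for any permutation $\vec y$ of $\vec x$. An absolute independence structure is a pair $(I,\mathcal{A})$ with $I$ a nonempty set and $\mathcal{A}$ a set of finite subsets of $I$ closed under subsets. A team with domain $I$ and values in $M$ is a set $X$ of functions $s:I\to M$. For a finite $\mathbf{x}\subseteq I$ and $x_i\in\mathbf{x}$ let $\mathbf{x}-_X x_i=\{x_j\in\mathbf{x} : \exists s\in X\ (s(x_i)\neq s(x_j))\}$; for $s,s'\in X$ and a set $\mathbf{z}\subseteq I$, $s(\mathbf{z})=s'(\mathbf{z})$ means $s(z)=s'(z)$ for all $z\in\mathbf{z}$. Let $\mathcal{A}_X$ be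 the set of finite $\mathbf{x}\subseteq I$ such that for every $x_i\in\mathbf{x}$: (1) for all $s,s'\in X$ there is $s''\in X$ with $s''(x_i)=s(x_i)$ and $s''(\mathbf{x}-_X x_i)=s'(\mathbf{x}-_X x_i)$, and (2) there are $s,s'\in X$ with $s(x_i)\neq s'(x_i)$. The absolute team independence structure of $X$ is $\mathcal{I}_X=(I,\mathcal{A}_X)$. Semantics: an assignment into $(I,\mathcal{A})$ is a map $s:V\to I$; for a sequence $\vec x=(x_0,\dots,x_{n-1})$ put $s(\vec x)=\{s(x_0),\dots,s(x_{n-1})\}$; $s$ satisfies $\bot(\vec x)$ in $(I,\mathcal{A})$ iff $s(\vec x)\in\mathcal{A}$. For a class $\mathbf{C}$ of such structures, $\Sigma\models_{\mathbf{C}}\phi$ means every assignment into every structure in $\mathbf{C}$ satisfying all atoms of $\Sigma$ also satisfies $\phi$. *)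

(* Variables V := nat (countably infinite). *)
From Stdlib Require Import List Permutation.
Import ListNotations.

(* An absolute independence atom ⊥(x) is represented by its variable
   sequence x : list nat; it is well formed iff its variables are
   pairwise distinct (NoDup x). *)
Definition atom (x : list nat) : Prop := NoDup x.

Inductive derivable (Sigma : list nat -> Prop) : list nat -> Prop :=
| der_hyp : forall phi, Sigma phi -> derivable Sigma phi
| der_empty : derivable Sigma []
| der_prefix : forall x y, derivable Sigma (x ++ y) -> derivable Sigma x
| der_perm : forall x y, derivable Sigma x -> Permutation x y -> derivable Sigma y.

Definition team (I M : Type) := (I -> M) -> Prop.

(* Membership of the finite subset {i | In i x} of I in A_X. *)
Definition in_AX {I M : Type} (X : team I M) (x : list I) : Prop :=
  forall xi, In xi x ->
    (forall s s', X s -> X s' ->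
       exists s'', X s'' /\ s'' xi = s xi /\
         (forall xj, In xj x -> (exists t, X t /\ t xi <> t xj) ->
            s'' xj = s' xj))
    /\ (exists s s', X s /\ X s' /\ s xi <> s' xi).

Definition sat_team {I M : Type} (X : team I M) (f : nat -> I) (x : list nat) : Prop :=
  in_AX X (map f x).

Definition models_ATM (Sigma : list nat -> Prop) (phi : list nat) : Prop :=
  forall (I M : Type) (X : team I M), (exists i : I, True) ->
    forall f : nat -> I,
      (forall sigma, Sigma sigma -> sat_team X f sigma) -> sat_team X f phi.

From Stdlib Require Import List Permutation Classical Arith Bool.
Import ListNotations.

(* Soundness: every A_X is closed under subsets (the membership condition for
   a set only quantifies over its elements and over fewer partners), so the
   rules "drop a suffix" and "permute" preserve satisfaction.

   Completeness: if phi is empty, or its variables are contained in those of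
   some atom of Sigma, then phi is derivable by permuting that atom so that
   phi comes first and dropping the rest.  Otherwise we use the parity team
   PT(phi) over the variables themselves (values in bool): all valuations
   whose restriction to phi has odd parity.  Any set missing a variable p of
   phi is independent in PT(phi), because p can always be flipped to repair
   the parity; but phi itself is not.  Under the identity assignment every
   atom of Sigma (which misses some variable of phi) holds and phi fails. *)

Lemma in_AX_incl {I M : Type} (X : team I M) (l l' : list I) :
  incl l l' -> in_AX X l' -> in_AX X l.
Proof.
  intros Hincl Hl' xi Hxi.
  destruct (Hl' xi (Hincl _ Hxi)) as [Hmix Hvar]. split; [|exact Hvar].
  intros s s' Hs Hs'.
  destruct (Hmix s s' Hs Hs') as [s'' [Hs'' [Hxi'' Hrest]]].
  exists s''. repeat split; auto.
Qed.

Lemma soundness (Sigma : list nat -> Prop) (phi : list nat) :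
  derivable Sigma phi -> models_ATM Sigma phi.
Proof.
  induction 1 as [phi Hphi | | x y _ IH | x y _ IH Hperm];
    intros I M X Hne f Hf.
  - apply Hf, Hphi.
  - intros xi [].
  - apply (in_AX_incl X _ (map f (x ++ y))); [|exact (IH I M X Hne f Hf)].
    apply incl_map, incl_appl, incl_refl.
  - apply (in_AX_incl X _ (map f x)); [|exact (IH I M X Hne f Hf)].
    apply incl_map. intros a Ha. exact (Permutation_in a (Permutation_sym Hperm) Ha).
Qed.

(* A duplicate-free atom whose variables occur in a derivable duplicate-free
   atom is derivable: permute sigma into phi ++ (sigma \ phi), then drop. *)
Lemma derivable_incl (Sigma : list nat -> Prop) (sigma phi : list nat) :
  derivable Sigma sigma -> NoDup sigma -> NoDup phi -> incl phi sigma ->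
  derivable Sigma phi.
Proof.
  intros Hsigma Hnd_sigma Hnd_phi Hincl.
  set (notin_phi := fun n => if in_dec Nat.eq_dec n phi then false else true).
  assert (Hrest : forall a, In a (filter notin_phi sigma) <-> In a sigma /\ ~ In a phi).
  { intros a. rewrite filter_In. unfold notin_phi.
    destruct (in_dec Nat.eq_dec a phi); intuition discriminate. }
  apply der_prefix with (filter notin_phi sigma).
  apply der_perm with sigma; [exact Hsigma|].
  apply NoDup_Permutation; [exact Hnd_sigma| |].
  - apply NoDup_app; [exact Hnd_phi | apply NoDup_filter, Hnd_sigma |].
    intros a Ha Hr. apply Hrest in Hr. tauto.
  - intros a. rewrite in_app_iff, Hrest. split.
    + intros Ha. destruct (in_dec Nat.eq_dec a phi); tauto.
    + intros [Ha | [Ha _]]; auto.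
Qed.

Definition parity (s : nat -> bool) (l : list nat) : bool :=
  fold_right (fun n b => xorb (s n) b) false l.

Definition flip (s : nat -> bool) (a : nat) : nat -> bool :=
  fun n => if Nat.eqb n a then negb (s n) else s n.

Lemma flip_eq (s : nat -> bool) (a : nat) : flip s a a = negb (s a).
Proof. unfold flip. rewrite Nat.eqb_refl. reflexivity. Qed.

Lemma flip_neq (s : nat -> bool) (a n : nat) : n <> a -> flip s a n = s n.
Proof. intros H. unfold flip. apply Nat.eqb_neq in H. rewrite H. reflexivity. Qed.

Lemma parity_ext (s t : nat -> bool) (l : list nat) :
  (forall n, In n l -> s n = t n) -> parity s l = parity t l.
Proof.
  induction l as [|a l IH]; simpl; intros H; [reflexivity|].
  rewrite H, IH; auto.
Qed.

Lemma parity_false (l : list nat) : parity (fun _ => false) l = false.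
Proof. induction l as [|a l IH]; simpl; [reflexivity | exact IH]. Qed.

Lemma parity_flip (s : nat -> bool) (a : nat) (l : list nat) :
  NoDup l -> In a l -> parity (flip s a) l = negb (parity s l).
Proof.
  induction l as [|c l IH]; simpl; intros Hnd Ha; [destruct Ha|].
  inversion Hnd as [|? ? Hc Hnd_l]; subst.
  destruct (Nat.eq_dec c a) as [->|Hca].
  - rewrite flip_eq, (parity_ext (flip s a) s l).
    + destruct (s a), (parity s l); reflexivity.
    + intros n Hn. apply flip_neq. intros ->. contradiction.
  - destruct Ha as [Ha|Ha]; [contradiction|].
    rewrite flip_neq, IH by auto. destruct (s c), (parity s l); reflexivity.
Qed.

Definition PT (phi : list nat) : team nat bool := fun s => parity s phi = true.

Definition repair (phi : list nat) (p : nat) (s : nat -> bool) : nat -> bool :=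
  if parity s phi then s else flip s p.

Lemma repair_PT (phi : list nat) (p : nat) (s : nat -> bool) :
  NoDup phi -> In p phi -> PT phi (repair phi p s).
Proof.
  intros Hnd Hp. unfold PT, repair.
  destruct (parity s phi) eqn:E; [exact E|].
  rewrite parity_flip, E; auto.
Qed.

Lemma repair_neq (phi : list nat) (p : nat) (s : nat -> bool) (n : nat) :
  n <> p -> repair phi p s n = s n.
Proof. intros H. unfold repair. destruct (parity s phi); auto using flip_neq. Qed.

(* Every set of variables missing some variable p of phi is independent in
   PT(phi): mixing s at xi with s' elsewhere and repairing at p works, and
   repairing the constant valuations false and (true at xi) gives members
   differing at xi. *)
Lemma PT_independent (phi x : list nat) (p : nat) :
  NoDup phi -> In p phi -> ~ In p x -> in_AX (PT phi) x.
Proof.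
  intros Hnd Hp Hpx xi Hxi.
  assert (Hxip : xi <> p) by (intros ->; contradiction).
  split.
  - intros s s' Hs Hs'.
    set (mix := fun n => if Nat.eqb n xi then s xi else s' n).
    exists (repair phi p mix). repeat split.
    + apply repair_PT; assumption.
    + rewrite repair_neq by exact Hxip. unfold mix. rewrite Nat.eqb_refl. reflexivity.
    + intros xj Hxj [t [_ Ht]].
      rewrite repair_neq by (intros ->; contradiction).
      unfold mix. destruct (Nat.eqb_spec xj xi) as [->|]; [congruence|reflexivity].
  - exists (repair phi p (fun _ => false)), (repair phi p (fun n => Nat.eqb n xi)).
    split; [apply repair_PT; assumption|]. split; [apply repair_PT; assumption|].
    rewrite !repair_neq, Nat.eqb_refl by exact Hxip. discriminate.
Qed.

(* For phi = [a] the value at a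
   is constant; for phi = a :: b :: _, mixing the members true-only-at-a and
   true-only-at-b would yield a member true at a and b only, of even parity. *)
Lemma PT_not_independent (phi : list nat) :
  NoDup phi -> phi <> [] -> ~ in_AX (PT phi) phi.
Proof.
  intros Hnd Hne Hind. destruct phi as [|a rest]; [contradiction|].
  destruct (Hind a (or_introl eq_refl)) as [Hmix Hvar].
  destruct rest as [|b rest].
  - destruct Hvar as [s [s' [Hs [Hs' Hdiff]]]]. unfold PT in Hs, Hs'. simpl in *.
    rewrite xorb_false_r in Hs, Hs'. congruence.
  - assert (Hab : a <> b) by (intros ->; inversion Hnd; simpl in *; tauto).
    set (only := fun c => flip (fun _ => false) c).
    assert (Honly : forall c, In c (a :: b :: rest) -> PT (a :: b :: rest) (only c)).
    { intros c Hc. unfold PT, only. rewrite parity_flip, parity_false by assumption.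
      reflexivity. }
    destruct (Hmix (only a) (only b)) as [s'' [Hs'' [Hsa Hothers]]];
      [apply Honly; simpl; auto .. |].
    assert (Hagree : forall n, In n (a :: b :: rest) -> s'' n = flip (only b) a n).
    { intros n Hn. destruct (Nat.eq_dec n a) as [->|Hna].
      - rewrite Hsa. unfold only. rewrite !flip_eq, !flip_neq by auto. reflexivity.
      - rewrite flip_neq by exact Hna. apply Hothers; [exact Hn|].
        exists (only a). split; [apply Honly; simpl; auto|].
        unfold only. rewrite flip_eq, flip_neq by exact Hna. discriminate. }
    unfold PT in Hs''. rewrite (parity_ext _ _ _ Hagree), parity_flip in Hs'' by
      (simpl; auto). rewrite (Honly b) in Hs''; [discriminate | simpl; auto].
Qed.

Lemma not_incl_witness (l l' : list nat) :
  ~ incl l l' -> exists p, In p l /\ ~ In p l'.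
Proof.
  induction l as [|a l IH]; intros H; [exfalso; apply H; intros ? []|].
  destruct (in_dec Nat.eq_dec a l') as [Ha|Ha].
  - destruct IH as [p [Hp Hp']].
    + intros Hincl. apply H. intros n [->|Hn]; auto.
    + exists p. simpl. auto.
  - exists a. simpl. auto.
Qed.

Lemma countermodel (Sigma : list nat -> Prop) (phi : list nat) :
  NoDup phi -> phi <> [] -> ~ (exists sigma, Sigma sigma /\ incl phi sigma) ->
  ~ models_ATM Sigma phi.
Proof.
  intros Hnd Hne Huncovered Hm.
  apply (PT_not_independent phi Hnd Hne).
  specialize (Hm nat bool (PT phi) (ex_intro _ 0 I) (fun n => n)).
  unfold sat_team in Hm. rewrite map_id in Hm. apply Hm.
  intros sigma Hsigma. rewrite map_id.
  destruct (not_incl_witness phi sigma) as [p [Hp Hp']].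
  - intros Hincl. apply Huncovered. exists sigma. split; assumption.
  - exact (PT_independent phi sigma p Hnd Hp Hp').
Qed.

Theorem mainTheorem1 (Sigma : list nat -> Prop) (phi : list nat) :
  (forall sigma, Sigma sigma -> atom sigma) -> atom phi ->
  (derivable Sigma phi <-> models_ATM Sigma phi).
Proof.
  intros HSigma Hphi. split; [apply soundness|].
  intros Hm.
  destruct (classic (phi = [])) as [->|Hne]; [apply der_empty|].
  destruct (classic (exists sigma, Sigma sigma /\ incl phi sigma))
    as [[sigma [Hsigma Hincl]] | Huncovered].
  - exact (derivable_incl Sigma sigma phi (der_hyp _ _ Hsigma) (HSigma _ Hsigma) Hphi Hincl).
  - exfalso. exact (countermodel Sigma phi Hphi Hne Huncovered Hm).
Qed.
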